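(* If a partial isometry $W\in\mathbf{M}_{2N}(\mathbb{C})$ is self-dual ($W^\sharp=W$), then the initial space $(\ker W)^\perp$ of $W$ has even dimension and $\mathcal{T}$ maps the initial space isometrically onto the final space $(\ker W^* )^\perp$ of $W$.
   Context: A partial isometry is $W$ with $WW^*W=W$. For $X\in\mathbf{M}_{2N}(\mathbb{C})$ in $N\times N$ blocks $X=\begin{bmatrix}A&B\\C&D\end{bmatrix}$, $X^{\sharp}=\begin{bmatrix}D^{\mathrm T}&-B^{\mathrm T}\\-C^{\mathrm T}&A^{\mathrm T}\end{bmatrix}$. $\mathcal{T}:\mathbb{C}^{2N}\to\mathbb{C}^{2N}$ is the conjugate-linear map $\mathcal{T}\begin{bmatrix}\mathbf v\\ \mathbf w\end{bmatrix}=\begin{bmatrix}-\overline{\mathbf w}\\ \overline{\mathbf v}\end{bmatrix}$ for $\mathbf v,\mathbf w\in\mathbb{C}^N$. *)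

From HB Require Import structures.
From mathcomp Require Import all_boot all_order all_algebra.
Set Implicit Arguments. Unset Strict Implicit. Unset Printing Implicit Defensive.
Import Order.TTheory GRing.Theory Num.Theory.
Local Open Scope ring_scope.

(* Scalars: an arbitrary numClosedFieldType C (e.g. R[i] for a real closed
   field R), with complex conjugation Num.conj (notation x^* ). *)

Section Defs.
Variable C : numClosedFieldType.

Definition adjmx m n (A : 'M[C]_(m, n)) : 'M[C]_(n, m) :=
  map_mx (fun x => x^*) A^T.

Definition partial_isometry n (W : 'M[C]_n) : Prop :=
  W *m adjmx W *m W = W.

Definition sharp N (X : 'M[C]_(N + N)) : 'M[C]_(N + N) :=
  block_mx (drsubmx X)^T (- (ursubmx X)^T)
           (- (dlsubmx X)^T) (ulsubmx X)^T.

Definition Tmap N (x : 'cV[C]_(N + N)) : 'cV[C]_(N + N) :=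
  col_mx (- map_mx (fun z => z^*) (dsubmx x)) (map_mx (fun z => z^*) (usubmx x)).

Definition norm2 n (x : 'cV[C]_n) : C := \sum_i x i 0 * (x i 0)^*.

(* Subspaces of C^n are represented (mxalgebra style) as row spaces of
   square matrices, whose rows are the transposes of the column vectors. *)

(* ker A = { v | A v = 0 }, as the row space of { v^T | v^T A^T = 0 } *)
Definition kerS n (A : 'M[C]_n) : 'M[C]_n := kermx A^T.

(* orthogonal complement w.r.t. the Hermitian inner product:
   x in S^perp  iff  <x, s> = sum_j x_j conj(s_j) = 0 for every row s of S *)
Definition orthS n (S : 'M[C]_n) : 'M[C]_n := kermx (adjmx S).

Definition initial_space n (W : 'M[C]_n) : 'M[C]_n := orthS (kerS W).
Definition final_space n (W : 'M[C]_n) : 'M[C]_n := orthS (kerS (adjmx W)).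

Definition inS n (v : 'cV[C]_n) (S : 'M[C]_n) : bool := (v^T <= S)%MS.

End Defs.

From HB Require Import structures.
From mathcomp Require Import all_boot all_order all_algebra.
Set Implicit Arguments. Unset Strict Implicit. Unset Printing Implicit Defensive.
Import Order.TTheory GRing.Theory Num.Theory.
Local Open Scope ring_scope.

(* Let J = [0 1; -1 0].  Then X^sharp = J^T X^T J and T v = J^T conj(v), so
   conjugation by T, A |-> T A T^-1 = J^T conj(A) J, sends W^* to W^sharp.  For
   a self-dual W it thus exchanges W^* and W, hence also the projections W^* W
   and W W^* onto the initial and final spaces; since T preserves the norm and
   T^2 = -1, it maps the initial space isometrically onto the final one.
   Parity: W J^T is skew-symmetric of the same rank r as W, and a skew-symmetric
   K of rank r factors as B^T X B with X an invertible skew-symmetric r x r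
   matrix, whose determinant satisfies det X = (-1)^r det X. *)

Section SkewSymmetric.
Variable F : fieldType.
Hypothesis two_neq0 : 2 != 0 :> F.

Lemma det_skew_odd n (X : 'M[F]_n) : odd n -> X^T = - X -> \det X = 0.
Proof.
move=> odd_n skX.
have : \det X = - \det X.
  by rewrite -{1}det_tr skX -scaleN1r detZ -signr_odd odd_n expr1 mulN1r.
move/eqP; rewrite -addr_eq0 -mulr2n -mulr_natl mulf_eq0 (negPf two_neq0).
by move/eqP.
Qed.

Lemma skew_row_free_congr r n (K : 'M[F]_n) (L : 'M_(n, r)) (B : 'M_(r, n)) :
  K^T = - K -> row_free B -> K = L *m B ->
  exists2 X : 'M_r, X^T = - X & K = B^T *m X *m B.
Proof.
move=> skK /row_freeP[R BR] KL.
have KRB : K *m R *m B = K by rewrite KL -(mulmxA L) BR mulmx1.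
have BRK : B^T *m R^T *m K = K.
  apply: oppr_inj; rewrite -mulmxN -skK -!trmx_mul mulmxA.
  by rewrite KRB.
exists (R^T *m K *m R); first by rewrite !trmx_mul trmxK skK mulNmx mulmxN mulmxA.
by rewrite !mulmxA BRK KRB.
Qed.

Lemma rank_skew_even n (K : 'M[F]_n) : K^T = - K -> ~~ odd (\rank K).
Proof.
move=> skK; have /submxP[L KL] : (K <= row_base K)%MS by rewrite eq_row_base.
have [X skX KX] := skew_row_free_congr skK (row_base_free K) KL.
have : X \in unitmx.
  rewrite -row_free_unit /row_free eqn_leq rank_leq_row /=.
  by rewrite {1}KX (leq_trans (mxrankM_maxl _ _)) ?mxrankM_maxr.
by apply: contraL => odd_r; rewrite unitmxE det_skew_odd ?unitr0.
Qed.

End SkewSymmetric.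

Section Adjoint.
Variable C : numClosedFieldType.
Local Notation conjmx := (map_mx (@Num.conj C)).

Lemma conjmxK m n (A : 'M[C]_(m, n)) : conjmx (conjmx A) = A.
Proof. by apply/matrixP => i j; rewrite !mxE conjCK. Qed.

Lemma conjmx_adj m n (A : 'M[C]_(m, n)) : conjmx (adjmx A) = A^T.
Proof. by apply/matrixP => i j; rewrite !mxE conjCK. Qed.

Lemma adjmxK m n (A : 'M[C]_(m, n)) : adjmx (adjmx A) = A.
Proof. by apply/matrixP => i j; rewrite !mxE conjCK. Qed.

Lemma adjmxM m n p (A : 'M[C]_(m, n)) (B : 'M_(n, p)) :
  adjmx (A *m B) = adjmx B *m adjmx A.
Proof. by rewrite /adjmx trmx_mul map_mxM. Qed.

Lemma adjmx_mul_eq0 m n (A : 'M[C]_(m, n)) : adjmx A *m A = 0 -> A = 0.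
Proof.
move=> AA0; apply/matrixP => i j; rewrite mxE.
have /eqP : (adjmx A *m A) j j = 0 by rewrite AA0 mxE.
rewrite mxE psumr_eq0 => [/allP/(_ i (mem_index_enum i))|k _]; last first.
  by rewrite !mxE mulrC mul_conjC_ge0.
by rewrite !mxE mulrC mul_conjC_eq0 => /eqP.
Qed.

Lemma partial_isometry_adj n (W : 'M[C]_n) :
  partial_isometry W -> partial_isometry (adjmx W).
Proof. by move=> WWW; rewrite /partial_isometry -!adjmxM mulmxA WWW. Qed.

Lemma inS_kerS n (A : 'M[C]_n) v : inS v (kerS A) = (A *m v == 0).
Proof. by rewrite /inS /kerS sub_kermx -trmx_mul trmx_eq0. Qed.

Lemma inS_orthS n (S : 'M[C]_n) v : inS v (orthS S) = (conjmx S *m v == 0).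
Proof. by rewrite /inS /orthS sub_kermx /adjmx -map_trmx -trmx_mul trmx_eq0. Qed.

Lemma initial_spaceP n (W : 'M[C]_n) v : partial_isometry W ->
  inS v (initial_space W) = (adjmx W *m W *m v == v).
Proof.
move=> WWW; rewrite /initial_space inS_orthS; set K := kerS W.
have KW : conjmx K *m adjmx W = 0.
  by rewrite /adjmx -map_mxM -/(kerS W) mulmx_ker map_mx0.
apply/eqP/eqP => [Kv | <-]; last by rewrite !mulmxA KW !mul0mx.
set x := v - adjmx W *m W *m v.
have /submxP[D xD] : (x^T <= K)%MS.
  by rewrite -/(inS x K) inS_kerS mulmxBr !mulmxA WWW subrr.
have : adjmx x *m x = 0.
  rewrite {1}/adjmx xD map_mxM -mulmxA mulmxBr Kv !mulmxA KW.
  by rewrite !mul0mx subrr mulmx0.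
by move/adjmx_mul_eq0/eqP; rewrite subr_eq0 => /eqP <-.
Qed.

Lemma final_spaceP n (W : 'M[C]_n) v : partial_isometry W ->
  inS v (final_space W) = (W *m adjmx W *m v == v).
Proof.
by move=> /partial_isometry_adj/initial_spaceP ->; rewrite adjmxK.
Qed.

Lemma rank_initial_space n (W : 'M[C]_n) : \rank (initial_space W) = \rank W.
Proof.
rewrite /initial_space /orthS /kerS mxrank_ker /adjmx mxrank_map mxrank_tr.
by rewrite mxrank_ker mxrank_tr subKn ?rank_leq_row.
Qed.

End Adjoint.

Section Symplectic.
Variables (R : pzRingType) (N : nat).

Definition symp_mx : 'M[R]_(N + N) := block_mx 0 1%:M (- 1%:M) 0.

Lemma tr_symp_mx : symp_mx^T = - symp_mx.
Proof.
rewrite /symp_mx tr_block_mx opp_block_mx !trmx0 trmx1 raddfN /= trmx1.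
by rewrite opprK !oppr0.
Qed.

Lemma mulmx_symp_mx : symp_mx *m symp_mx = - 1%:M.
Proof.
rewrite /symp_mx mulmx_block !mul0mx !mulmx0 !mul1mx !mulmx1 !add0r !addr0.
by rewrite [in RHS]scalar_mx_block opp_block_mx oppr0.
Qed.

Lemma mulmx_symp_tr : symp_mx *m symp_mx^T = 1%:M.
Proof. by rewrite tr_symp_mx mulmxN mulmx_symp_mx opprK. Qed.

Lemma mulmx_tr_symp : symp_mx^T *m symp_mx = 1%:M.
Proof. by rewrite tr_symp_mx mulNmx mulmx_symp_mx opprK. Qed.

End Symplectic.

Lemma map_symp_mx (R S : pzRingType) (f : {rmorphism R -> S}) N :
  map_mx f (symp_mx R N) = symp_mx S N.
Proof. by rewrite /symp_mx map_block_mx !map_mx0 map_mxN map_mx1. Qed.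

Section ConjugationByT.
Variables (C : numClosedFieldType) (N : nat).
Local Notation conjmx := (map_mx (@Num.conj C)).
Local Notation J := (symp_mx C N).

(* [Tconj A] is the matrix of the linear map [T A T^-1]. *)
Definition Tconj (A : 'M[C]_(N + N)) := J^T *m conjmx A *m J.

Lemma TmapE (v : 'cV[C]_(N + N)) : Tmap v = J^T *m conjmx v.
Proof.
rewrite /Tmap tr_symp_mx /symp_mx -{3}[v]vsubmxK map_col_mx opp_block_mx.
by rewrite mul_block_col !oppr0 opprK !mul0mx add0r addr0 !mulNmx !mul1mx.
Qed.

Lemma TmapB (u v : 'cV[C]_(N + N)) : Tmap (u - v) = Tmap u - Tmap v.
Proof. by rewrite !TmapE map_mxB mulmxBr. Qed.

Lemma TmapK (v : 'cV[C]_(N + N)) : Tmap (Tmap v) = - v.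
Proof.
rewrite !TmapE map_mxM -map_trmx map_symp_mx conjmxK mulmxA.
by rewrite tr_symp_mx mulNmx mulmxN opprK mulmx_symp_mx mulNmx mul1mx.
Qed.

Lemma Tmap_mulmx A (v : 'cV[C]_(N + N)) : Tmap (A *m v) = Tconj A *m Tmap v.
Proof.
by rewrite !TmapE /Tconj map_mxM -!mulmxA (mulmxA J) mulmx_symp_tr mul1mx.
Qed.

Lemma TconjM A B : Tconj (A *m B) = Tconj A *m Tconj B.
Proof.
by rewrite /Tconj map_mxM -!mulmxA (mulmxA J) mulmx_symp_tr mul1mx.
Qed.

Lemma TconjK A : Tconj (Tconj A) = A.
Proof.
rewrite /Tconj !map_mxM -map_trmx map_symp_mx conjmxK tr_symp_mx.
rewrite !(mulNmx, mulmxN) opprK !mulmxA mulmx_symp_mx -mulmxA mulmx_symp_mx.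
by rewrite mulNmx mul1mx mulmxN mulmx1 opprK.
Qed.

Lemma Tconj_adjmx (X : 'M[C]_(N + N)) : Tconj (adjmx X) = sharp X.
Proof.
rewrite /Tconj conjmx_adj -[X]submxK /sharp.
rewrite block_mxKul block_mxKur block_mxKdl block_mxKdr tr_block_mx.
rewrite tr_symp_mx /symp_mx opp_block_mx !mulmx_block.
by rewrite !(mul0mx, mulmx0, mul1mx, mulmx1, add0r, addr0, mulNmx, mulmxN,
  oppr0, opprK).
Qed.

Lemma norm2_col m n (a : 'cV[C]_m) (b : 'cV[C]_n) :
  norm2 (col_mx a b) = norm2 a + norm2 b.
Proof.
rewrite /norm2 big_split_ord /=.
by congr (_ + _); apply: eq_bigr => i _; rewrite ?col_mxEu ?col_mxEd.
Qed.

Lemma norm2_Tmap (v : 'cV[C]_(N + N)) : norm2 (Tmap v) = norm2 v.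
Proof.
rewrite /Tmap -{3}[v]vsubmxK !norm2_col addrC.
congr (_ + _); apply: eq_bigr => i _;
  by rewrite !mxE ?rmorphN /= conjCK ?mulrNN mulrC.
Qed.

Lemma rank_self_dual_even (W : 'M[C]_(N + N)) : sharp W = W -> ~~ odd (\rank W).
Proof.
move=> sdW.
have WE : W = J^T *m W^T *m J by rewrite -{1}sdW -Tconj_adjmx /Tconj conjmx_adj.
have Jfree : row_free J^T.
  by rewrite row_free_unit; case: (mulmx1_unit (mulmx_tr_symp C N)).
rewrite -(mxrankMfree _ Jfree); apply: rank_skew_even; first by rewrite pnatr_eq0.
rewrite trmx_mul trmxK {2}WE -!mulmxA mulmx_symp_tr mulmx1.
by rewrite tr_symp_mx mulNmx opprK.
Qed.

End ConjugationByT.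

Theorem mainTheorem13 (C : numClosedFieldType) (N : nat) (W : 'M[C]_(N + N)) :
  partial_isometry W -> sharp W = W ->
  ~~ odd (\rank (initial_space W)) /\
  (forall v, inS v (initial_space W) -> inS (Tmap v) (final_space W)) /\
  (forall u v, inS u (initial_space W) -> inS v (initial_space W) ->
     norm2 (Tmap u - Tmap v) = norm2 (u - v)) /\
  (forall w, inS w (final_space W) ->
     exists2 v, inS v (initial_space W) & Tmap v = w).
Proof.
move=> piW sdW.
have T_adjW : Tconj (adjmx W) = W by rewrite Tconj_adjmx.
have T_W : Tconj W = adjmx W by rewrite -{1}T_adjW TconjK.
have T_init : Tconj (adjmx W *m W) = W *m adjmx W by rewrite TconjM T_adjW T_W.
have T_final : Tconj (W *m adjmx W) = adjmx W *m W by rewrite TconjM T_adjW T_W.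
split; [|split; [|split]].
- by rewrite rank_initial_space rank_self_dual_even.
- move=> v; rewrite initial_spaceP // final_spaceP // => /eqP v_init.
  by rewrite -T_init -Tmap_mulmx v_init.
- by move=> u v _ _; rewrite -TmapB norm2_Tmap.
- move=> w; rewrite final_spaceP // => /eqP w_final.
  exists (Tmap (- w)); last by rewrite TmapK opprK.
  by rewrite initial_spaceP // -T_final -Tmap_mulmx mulmxN w_final.
Qed.
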